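(* Let $i\in[n]$ be such that $m_i=1$, and let $N\subseteq M_i$. Then $M_i\setminus N$ is an abelian ideal if and only if there exists $w\in W^i$ such that $N=\overline N(w)$.
   Context: $\Phi$ is a finite irreducible crystallographic root system with basis $\Pi=\{\alpha_1,\dots,\alpha_n\}$, positive roots $\Phi^+$, highest root $\theta=\sum_i m_i\alpha_i$, Weyl group $W$ with length $\ell$. The root poset is $\Phi^+$ with $\beta\ge\gamma$ iff $\beta-\gamma$ is a nonnegative integer combination of simple roots; an abelian ideal is a subset of $\Phi^+$ closed upward in the root poset with $(I+I)\cap\Phi=\emptyset$. $M_i=\{\beta\in\Phi^+\mid\beta\ge\alpha_i\}$; $D_r(w)=\{\alpha\in\Pi\mid\ell(ws_\alpha)<\ell(w)\}$; $W^i=\{w\in W\mid D_r(w)\subseteq\{\alpha_i\}\}$; $\overline N(w)=\{\beta\in\Phi^+\mid w(\beta)\in-\Phi^+\}$. *)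

From HB Require Import structures.
From mathcomp Require Import all_boot all_order all_algebra.
Set Implicit Arguments. Unset Strict Implicit. Unset Printing Implicit Defensive.
Import Order.TTheory GRing.Theory Num.Theory.
Local Open Scope ring_scope.

Section RootSystems.
Variables (R : realFieldType) (n : nat).
Local Notation V := 'rV[R]_n.

Definition dot (u v : V) : R := (u *m v^T) 0 0.

Definition refl (a v : V) : V := v - ((2 * dot v a) / dot a a) *: a.

Definition is_int (x : R) : Prop := exists z : int, x = z%:~R.

Definition root_system (Phi : seq V) : Prop :=
  [/\ (0 : V) \notin Phi,
      (<<Phi>>%VS = fullv),
      (forall a b, a \in Phi -> b \in Phi -> refl a b \in Phi),
      (forall a b, a \in Phi -> b \in Phi -> is_int ((2 * dot b a) / dot a a))
    & (forall a (c : R), a \in Phi -> c *: a \in Phi -> c = 1 \/ c = -1)].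

Definition irreducible_rs (Phi : seq V) : Prop :=
  forall S : V -> Prop,
    (forall a b, a \in Phi -> b \in Phi -> S a -> ~ S b -> dot a b = 0) ->
    (forall a, a \in Phi -> S a) \/ (forall a, a \in Phi -> ~ S a).

Definition nncomb (alpha : 'I_n -> V) (v : V) : Prop :=
  exists c : 'I_n -> nat, v = \sum_(j < n) (c j)%:R *: alpha j.

Definition is_base (Phi : seq V) (alpha : 'I_n -> V) : Prop :=
  [/\ (forall j, alpha j \in Phi),
      row_free (\matrix_(j < n) alpha j)
    & (forall b, b \in Phi -> nncomb alpha b \/ nncomb alpha (- b))].

Definition posroot (Phi : seq V) (alpha : 'I_n -> V) (b : V) : Prop :=
  b \in Phi /\ nncomb alpha b.

Definition rle (alpha : 'I_n -> V) (g b : V) : Prop := nncomb alpha (b - g).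

Definition Mset (Phi : seq V) (alpha : 'I_n -> V) (i : 'I_n) (b : V) : Prop :=
  posroot Phi alpha b /\ rle alpha (alpha i) b.

Definition abelian_ideal (Phi : seq V) (alpha : 'I_n -> V) (I : V -> Prop) : Prop :=
  [/\ (forall b, I b -> posroot Phi alpha b),
      (forall b g, I b -> posroot Phi alpha g -> rle alpha b g -> I g)
    & (forall b g, I b -> I g -> (b + g) \notin Phi)].

(* Weyl group elements, as words in the simple reflections:
   the word [:: j1; ...; jk] stands for w = s_{j1} ... s_{jk}. *)
Definition wact (alpha : 'I_n -> V) (w : seq 'I_n) (v : V) : V :=
  foldr (fun j x => refl (alpha j) x) v w.

Definition wequiv (alpha : 'I_n -> V) (w w' : seq 'I_n) : Prop :=
  forall v, wact alpha w v = wact alpha w' v.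

Definition is_length (alpha : 'I_n -> V) (w : seq 'I_n) (k : nat) : Prop :=
  (exists w', size w' = k /\ wequiv alpha w w') /\
  (forall w', wequiv alpha w w' -> (k <= size w')%N).

Definition right_descent (alpha : 'I_n -> V) (w : seq 'I_n) (j : 'I_n) : Prop :=
  exists k1 k2, [/\ is_length alpha (rcons w j) k1, is_length alpha w k2 & (k1 < k2)%N].

Definition in_Wi (alpha : 'I_n -> V) (i : 'I_n) (w : seq 'I_n) : Prop :=
  forall j, right_descent alpha w j -> j = i.

Definition Nbar (Phi : seq V) (alpha : 'I_n -> V) (w : seq 'I_n) (b : V) : Prop :=
  posroot Phi alpha b /\
  exists g, posroot Phi alpha g /\ wact alpha w b = - g.

End RootSystems.

(* Since m_i = 1, every positive root has alpha_i-coordinate 0 or 1, and M_i consists of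
   those with coordinate 1; so M_i is upward closed and no sum of two of its elements is a
   root.  An element w of W^i maps every alpha_k with k <> i to a positive root, hence maps
   nonnegative combinations of these alpha_k to nonnegative combinations; as two elements
   beta <= gamma of M_i differ by such a combination, w(beta) > 0 forces w(gamma) > 0, and
   M_i \ Nbar(w) is an abelian ideal.
   Conversely, if M_i \ N is upward closed, induct on |N|: remove from N a maximal element
   beta and write N \ {beta} = Nbar(w').  Then w'(beta) is a simple root alpha_j, and
   N = Nbar(s_j w').  Otherwise w'(beta) is the sum of two roots positive under w'; pulling
   them back by w' writes beta = x + y, and comparing alpha_i-coordinates puts one of x, y in
   M_i \ N strictly below beta.
   Descents are read off Nbar because l(w) = |Nbar(w)|, which follows from counting how
   right multiplication by a simple reflection changes the inversion set. *)

From HB Require Import structures.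
From mathcomp Require Import all_boot all_order all_algebra.
From mathcomp Require Import ring lra zify.
From mathcomp Require Import boolp.
Set Implicit Arguments. Unset Strict Implicit. Unset Printing Implicit Defensive.
Import Order.TTheory GRing.Theory Num.Theory.
Local Open Scope ring_scope.

Lemma seq_argmax (T : eqType) (R : realDomainType) (f : T -> R) (s : seq T) :
  s != [::] -> exists2 x, x \in s & forall y, y \in s -> f y <= f x.
Proof.
elim: s => // a [|b s] IH _.
  by exists a => [|y]; rewrite ?mem_seq1 // => /eqP ->.
have [x xs xmax] := IH isT.
have [ax|xa] := leP (f a) (f x).
  exists x; first by rewrite in_cons xs orbT.
  by move=> y; rewrite in_cons => /predU1P [->|/xmax].
exists a; first exact: mem_head.
by move=> y; rewrite in_cons => /predU1P [->//|/xmax fy]; apply: le_trans fy (ltW xa).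
Qed.

Lemma count_uniq_rem (T : eqType) (P : pred T) (s : seq T) x : uniq s -> x \in s ->
  count P s = (P x + count (predI P (predC1 x)) s)%N.
Proof.
by move=> us xs; rewrite (permP (perm_to_rem xs)) /= rem_filter // count_filter.
Qed.

Section NaturalNumbers.
Variable R : numDomainType.
Implicit Types x y : R.

Definition is_nat x := exists c : nat, x = c%:R.

Lemma is_nat_nat (c : nat) : is_nat c%:R. Proof. by exists c. Qed.

Lemma is_nat0 : is_nat 0. Proof. by exists 0%N. Qed.

Lemma is_natD x y : is_nat x -> is_nat y -> is_nat (x + y).
Proof. by move=> [a ->] [b ->]; exists (a + b)%N; rewrite natrD. Qed.

Lemma is_natM x y : is_nat x -> is_nat y -> is_nat (x * y).
Proof. by move=> [a ->] [b ->]; exists (a * b)%N; rewrite natrM. Qed.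

Lemma is_nat_sum (I : finType) (F : I -> R) :
  (forall k, is_nat (F k)) -> is_nat (\sum_k F k).
Proof. by move=> F_nat; elim/big_ind: _ => //; [exact: is_nat0|exact: is_natD]. Qed.

Lemma is_nat_ge0 x : is_nat x -> 0 <= x.
Proof. by move=> [a ->]; rewrite ler0n. Qed.

Lemma is_nat_le1 x : is_nat x -> x <= 1 -> x = 0 \/ x = 1.
Proof.
move=> [a ->]; rewrite -[X in _ <= X]mulr1n ler_nat.
by case: a => [|[|]] //= _; [left|right].
Qed.

End NaturalNumbers.

Section Euclidean.
Variables (R : realFieldType) (n : nat).
Local Notation V := 'rV[R]_n.
Implicit Types u v a : V.

Lemma dotE u v : dot u v = \sum_k u 0 k * v 0 k.
Proof. by rewrite /dot !mxE; apply: eq_bigr => k _; rewrite mxE. Qed.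

Lemma dotC u v : dot u v = dot v u.
Proof. by rewrite !dotE; apply: eq_bigr => k _; rewrite mulrC. Qed.

Lemma dotDl u u' v : dot (u + u') v = dot u v + dot u' v.
Proof. by rewrite !dotE -big_split; apply: eq_bigr => k _; rewrite mxE mulrDl. Qed.

Lemma dotZl c u v : dot (c *: u) v = c * dot u v.
Proof. by rewrite !dotE mulr_sumr; apply: eq_bigr => k _; rewrite mxE mulrA. Qed.

Lemma dot_suml (I : finType) (F : I -> V) v : dot (\sum_i F i) v = \sum_i dot (F i) v.
Proof.
elim/big_rec2: _ => [|i u' y _ <-]; rewrite ?dotDl //.
by rewrite dotE big1 // => k _; rewrite mxE mul0r.
Qed.

Lemma dotBl u u' v : dot (u - u') v = dot u v - dot u' v.
Proof. by rewrite dotDl -scaleN1r dotZl mulN1r. Qed.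

Lemma dotZr c u v : dot u (c *: v) = c * dot u v.
Proof. by rewrite dotC dotZl dotC. Qed.

Lemma dotBr u v v' : dot u (v - v') = dot u v - dot u v'.
Proof. by rewrite dotC dotBl !(dotC u). Qed.

Lemma dot_gt0 u : u != 0 -> 0 < dot u u.
Proof.
have sqr_ge0 k : 0 <= u 0 k * u 0 k by rewrite -expr2 sqr_ge0.
move=> u0; rewrite lt_def dotE sumr_ge0 ?andbT // psumr_eq0 //.
apply: contra u0 => /allP u0; apply/eqP/rowP => k; rewrite mxE.
by have := u0 k (mem_index_enum k); rewrite /= mulf_eq0 orbb => /eqP.
Qed.

Lemma dot_neq0 u : u != 0 -> dot u u != 0.
Proof. by move/dot_gt0; rewrite lt0r => /andP[]. Qed.

Lemma dot_sqr_lt u v : v != 0 -> (forall c, u != c *: v) ->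
  dot u v ^+ 2 < dot u u * dot v v.
Proof.
move=> v0 u_notin; set x := dot v v *: u - dot u v *: v.
have x0 : x != 0.
  rewrite subr_eq0; apply: contra (u_notin ((dot v v)^-1 * dot u v)) => /eqP xE.
  by rewrite -scalerA -xE scalerA mulVf ?dot_neq0 ?scale1r.
have xxE : dot x x = dot v v * (dot u u * dot v v - dot u v ^+ 2).
  by rewrite /x !dotBl !dotBr !dotZl !dotZr (dotC v u); ring.
by have := dot_gt0 x0; rewrite xxE pmulr_rgt0 ?dot_gt0 // subr_gt0.
Qed.

Lemma reflD a u v : refl a (u + v) = refl a u + refl a v.
Proof.
rewrite /refl dotDl mulrDr mulrDl scalerDl opprD.
by rewrite !addrA (addrAC u v).
Qed.

Lemma reflZ a c u : refl a (c *: u) = c *: refl a u.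
Proof. by rewrite /refl dotZl scalerBr scalerA !mulrA (mulrC 2). Qed.

Lemma reflN a u : refl a (- u) = - refl a u.
Proof. by rewrite -scaleN1r reflZ scaleN1r. Qed.

Lemma refl_self a : a != 0 -> refl a a = - a.
Proof.
move=> /dot_neq0 aa0; rewrite /refl -mulrA divff // mulr1 scalerDl scale1r.
by rewrite opprD addrA subrr add0r.
Qed.

Lemma dot_refl a u v : a != 0 -> dot (refl a u) (refl a v) = dot u v.
Proof.
move=> /dot_neq0 aa0; rewrite /refl dotBl !dotBr !dotZl !dotZr (dotC a v).
by field.
Qed.

Lemma reflK a : a != 0 -> involutive (refl a).
Proof.
move=> /dot_neq0 aa0 u.
have refl_dot_a : dot (refl a u) a = - dot u a by rewrite /refl dotBl dotZl; field.
by rewrite {1}/refl refl_dot_a mulrN mulNr scaleNr opprK /refl subrK.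
Qed.

End Euclidean.

Section Coordinates.
Variables (R : realFieldType) (n : nat) (alpha : 'I_n -> 'rV[R]_n).
Hypothesis alpha_free : row_free (\matrix_(j < n) alpha j).
Local Notation V := 'rV[R]_n.
Local Notation A := (\matrix_(j < n) alpha j).
Implicit Types u v : V.

Definition bcoord v : {ffun 'I_n -> R} := [ffun k => (v *m invmx A) 0 k].

Definition natcoords v := forall k, is_nat (bcoord v k).

Definition height v := \sum_k bcoord v k.

Lemma bcoordD u v k : bcoord (u + v) k = bcoord u k + bcoord v k.
Proof. by rewrite !ffunE mulmxDl mxE. Qed.

Lemma bcoordZ c v k : bcoord (c *: v) k = c * bcoord v k.
Proof. by rewrite !ffunE -scalemxAl mxE. Qed.

Lemma bcoordN v k : bcoord (- v) k = - bcoord v k.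
Proof. by rewrite !ffunE mulNmx mxE. Qed.

Lemma bcoordB u v k : bcoord (u - v) k = bcoord u k - bcoord v k.
Proof. by rewrite bcoordD bcoordN. Qed.

Lemma bcoord0 k : bcoord 0 k = 0.
Proof. by rewrite ffunE mul0mx mxE. Qed.

Lemma bcoord_sum (I : finType) (F : I -> V) k :
  bcoord (\sum_i F i) k = \sum_i bcoord (F i) k.
Proof. by elim/big_rec2: _ => [|i x y _ <-]; rewrite ?bcoord0 ?bcoordD. Qed.

Lemma comb_mulmx (c : 'I_n -> R) : \sum_j c j *: alpha j = \row_j c j *m A.
Proof. by rewrite mulmx_sum_row; apply: eq_bigr => j _; rewrite rowK mxE. Qed.

Lemma bcoord_comb (c : 'I_n -> R) k : bcoord (\sum_j c j *: alpha j) k = c k.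
Proof. by rewrite ffunE comb_mulmx mulmxK ?mxE // -row_free_unit. Qed.

Lemma bcoordK v : \sum_j bcoord v j *: alpha j = v.
Proof.
rewrite comb_mulmx -[RHS](mulmxKV (_ : A \in unitmx)) -?row_free_unit //.
by congr (_ *m _); apply/rowP => k; rewrite mxE ffunE.
Qed.

Lemma bcoord_inj u v : (forall k, bcoord u k = bcoord v k) -> u = v.
Proof. by move=> uv; rewrite -[u]bcoordK -[v]bcoordK; apply: eq_bigr => j _; rewrite uv. Qed.

Lemma bcoord_alpha j k : bcoord (alpha j) k = (j == k)%:R.
Proof.
have -> : alpha j = \sum_i (j == i)%:R *: alpha i.
  rewrite (bigD1 j) //= eqxx scale1r big1 ?addr0 //.
  by move=> k' /negbTE k'j; rewrite eq_sym k'j scale0r.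
by rewrite bcoord_comb.
Qed.

Lemma nncombP v : nncomb alpha v <-> natcoords v.
Proof.
split=> [[c ->] k|v_nat]; first by rewrite bcoord_comb; apply: is_nat_nat.
have c_ex k : exists c : nat, bcoord v k == c%:R by have [c ->] := v_nat k; exists c.
exists (fun k => xchoose (c_ex k)); rewrite -{1}[v]bcoordK; apply: eq_bigr => j _.
by have /eqP <- := xchooseP (c_ex j).
Qed.

Lemma natcoords_alpha j : natcoords (alpha j).
Proof. by move=> k; rewrite bcoord_alpha; apply: is_nat_nat. Qed.

Lemma natcoordsD u v : natcoords u -> natcoords v -> natcoords (u + v).
Proof. by move=> u_nat v_nat k; rewrite bcoordD; apply: is_natD. Qed.

Lemma natcoords_height_le0 v : natcoords v -> height v <= 0 -> v = 0.
Proof.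
move=> v_nat v_le0; have coord_ge0 k : 0 <= bcoord v k by apply: is_nat_ge0.
have : height v == 0 by rewrite eq_le v_le0 sumr_ge0.
rewrite psumr_eq0 // => /allP v0; apply: bcoord_inj => k.
by rewrite bcoord0; apply/eqP/v0/mem_index_enum.
Qed.

Lemma exists_maximal (P : V -> Prop) (s : seq V) : (exists2 x, x \in s & P x) ->
  exists beta, [/\ beta \in s, P beta &
    forall g, g \in s -> P g -> natcoords (g - beta) -> g = beta].
Proof.
move=> [x xs Px]; have [|beta] := seq_argmax height (s := filter (fun b => `[< P b >]) s).
  by rewrite -size_eq0 size_filter -lt0n -has_count; apply/hasP; exists x => //; apply/asboolP.
rewrite mem_filter => /andP [/asboolP Pbeta betas] beta_max; exists beta; split=> // g gs Pg gbeta.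
apply/eqP; rewrite -subr_eq0; apply/eqP/natcoords_height_le0 => //.
have := beta_max g; rewrite mem_filter gs andbT => /(_ (asboolT Pg)).
by rewrite /height (eq_bigr _ (fun k _ => bcoordB _ _ k)) sumrB subr_le0.
Qed.

End Coordinates.

Section RootSystem.
Variables (R : realFieldType) (n : nat) (Phi : seq 'rV[R]_n) (alpha : 'I_n -> 'rV[R]_n).
Hypotheses (Phi_rs : root_system Phi) (alpha_base : is_base Phi alpha).
Local Notation V := 'rV[R]_n.
Local Notation natcoords := (natcoords alpha).
Local Notation bcoord := (bcoord alpha).
Implicit Types u v x y : V.

Let alpha_free : row_free (\matrix_(j < n) alpha j).
Proof. by case: alpha_base. Qed.

Lemma root_neq0 v : v \in Phi -> v != 0.
Proof. by case: Phi_rs => Phi0 _ _ _ _; apply: contraTneq => ->. Qed.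

Lemma alpha_root j : alpha j \in Phi.
Proof. by case: alpha_base. Qed.

Lemma alpha_neq0 j : alpha j != 0.
Proof. exact/root_neq0/alpha_root. Qed.

Lemma refl_root a v : a \in Phi -> v \in Phi -> refl a v \in Phi.
Proof. by case: Phi_rs => _ _ refl_Phi _ _; apply: refl_Phi. Qed.

Lemma oppr_root v : v \in Phi -> - v \in Phi.
Proof. by move=> vP; rewrite -refl_self ?root_neq0 // refl_root. Qed.

Lemma root_scalar a c : a \in Phi -> c *: a \in Phi -> c = 1 \/ c = -1.
Proof. by case: Phi_rs => _ _ _ _; apply. Qed.

Lemma root_signs v : v \in Phi -> natcoords v \/ natcoords (- v).
Proof. by case: alpha_base => _ _ /[apply] -[] /(nncombP alpha_free); [left|right]. Qed.

Lemma root_not_both_signs v : v \in Phi -> natcoords v -> natcoords (- v) -> False.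
Proof.
move=> vP v_nat Nv_nat; move: (root_neq0 vP); rewrite (_ : v = 0) ?eqxx //.
apply: (bcoord_inj alpha_free) => k.
apply/eqP; rewrite bcoord0 eq_le (is_nat_ge0 (v_nat k)) andbT -oppr_ge0 -bcoordN.
exact: is_nat_ge0.
Qed.

Lemma root_supp1 v j : v \in Phi -> natcoords v ->
  (forall k, k != j -> bcoord v k = 0) -> v = alpha j.
Proof.
move=> vP v_nat v_supp.
have vE : v = bcoord v j *: alpha j.
  apply: (bcoord_inj alpha_free) => k; rewrite bcoordZ (bcoord_alpha alpha_free).
  by have [<-|jk] := eqVneq j k; rewrite ?mulr1 // mulr0 v_supp // eq_sym.
move: vP; rewrite {1}vE => /(root_scalar (alpha_root j)) [c1|cN1].
  by rewrite vE c1 scale1r.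
by have := is_nat_ge0 (v_nat j); rewrite cN1 ler0N1.
Qed.

Lemma refl_simple_pos j x : x \in Phi -> natcoords x -> x != alpha j ->
  natcoords (refl (alpha j) x) /\ refl (alpha j) x != alpha j.
Proof.
move=> xP x_nat xj.
have [k kj xk] : exists2 k, k != j & bcoord x k != 0.
  apply: contrapT => /forall2NP x_supp; move/eqP: xj; apply.
  apply: root_supp1 => // k kj.
  by case: (x_supp k) => // /negP; rewrite negbK => /eqP.
have sxk : bcoord (refl (alpha j) x) k = bcoord x k.
  by rewrite /refl bcoordB bcoordZ (bcoord_alpha alpha_free) (eq_sym j k) (negbTE kj) mulr0 subr0.
have sxP : refl (alpha j) x \in Phi by rewrite refl_root ?alpha_root.
split; last by apply: contraNneq xk => sxj; rewrite -sxk sxj (bcoord_alpha alpha_free) (eq_sym j k) (negbTE kj).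
case: (root_signs sxP) => // sx_neg; exfalso; move/negP: xk; apply.
rewrite eq_le (is_nat_ge0 (x_nat k)) andbT -sxk -oppr_ge0 -bcoordN; exact: is_nat_ge0.
Qed.

(* By strict Cauchy-Schwarz the two Cartan integers are positive with product < 4,
   so one of them is 1. *)
Lemma subr_root g a : g \in Phi -> a \in Phi -> 0 < dot g a -> g != a -> g != - a ->
  g - a \in Phi.
Proof.
move=> gP aP ga_gt0 ga gNa.
have aa_gt0 := dot_gt0 (root_neq0 aP); have gg_gt0 := dot_gt0 (root_neq0 gP).
have cartan u v : u \in Phi -> v \in Phi -> 0 < dot u v ->
    exists2 z : int, 2 * dot u v / dot v v = z%:~R & (0 < z)%R.
  move=> uP vP uv_gt0; case: Phi_rs => _ _ _ /(_ v u vP uP) [z zE] _; exists z => //.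
  by rewrite -(ltr0z R) -zE divr_gt0 ?mulr_gt0 ?dot_gt0 ?root_neq0.
have [za zaE za_gt0] := cartan _ _ gP aP ga_gt0.
have [zb zbE zb_gt0] := cartan _ _ aP gP (ltac:(by rewrite dotC)).
have ga_sqr : dot g a ^+ 2 < dot g g * dot a a.
  apply: dot_sqr_lt; first exact: root_neq0.
  move=> c; apply/eqP => gE; move: (gP); rewrite gE => /(root_scalar aP) [c1|cN1].
    by move/eqP: ga; rewrite gE c1 scale1r.
  by move/eqP: gNa; rewrite gE cN1 scaleN1r.
have zab : (za * zb < 4)%R.
  rewrite -(ltr_int R) intrM -zaE -zbE (dotC a g).
  have -> : 2 * dot g a / dot a a * (2 * dot g a / dot g g)
            = 4 * (dot g a ^+ 2 / (dot g g * dot a a)).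
    by field; rewrite !lt0r_neq0.
  by rewrite gtr_pMr // ltr_pdivrMr ?mulr_gt0 // mul1r.
have [za1|zb1] : za = 1 \/ zb = 1 by lia.
  by move: (refl_root aP gP); rewrite /refl zaE za1 scale1r.
by move: (oppr_root (refl_root gP aP)); rewrite /refl zbE zb1 scale1r opprB.
Qed.

(* [dot g g] is a nonnegative combination of the [dot (alpha k) g], so one of them is positive. *)
Lemma exists_simple_subr g : g \in Phi -> natcoords g -> (forall j, g != alpha j) ->
  exists j, g - alpha j \in Phi /\ natcoords (g - alpha j).
Proof.
move=> gP g_nat g_simple.
have [j gj_gt0] : exists j, 0 < dot g (alpha j).
  apply: contrapT => /forallNP gj_le0.
  suff : dot g g <= 0 by rewrite leNgt dot_gt0 ?root_neq0.
  rewrite -{2}[g](bcoordK alpha_free) dotC dot_suml.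
  apply: sumr_le0 => k _; rewrite dotZl dotC mulr_ge0_le0 ?is_nat_ge0 // leNgt.
  exact/negP/gj_le0.
have gNa : g != - alpha j.
  apply/eqP => gE; apply: (root_not_both_signs (alpha_root j)).
    exact: natcoords_alpha.
  by rewrite -gE.
have gjP := subr_root gP (alpha_root j) gj_gt0 (g_simple j) gNa.
exists j; split => //; case: (root_signs gjP) => // gj_neg; exfalso.
move/eqP: (g_simple j); apply; apply: root_supp1 => // k kj.
apply/eqP; rewrite eq_le (is_nat_ge0 (g_nat k)) andbT.
have := is_nat_ge0 (gj_neg k).
by rewrite bcoordN bcoordB (bcoord_alpha alpha_free) (eq_sym j k) (negbTE kj) subr0 oppr_ge0.
Qed.


Local Notation wact := (wact alpha).

Lemma wact_rcons w j v : wact (rcons w j) v = wact w (refl (alpha j) v).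
Proof. by rewrite /wact foldr_rcons. Qed.

Lemma wactD w u v : wact w (u + v) = wact w u + wact w v.
Proof. by elim: w => //= j w ->; rewrite reflD. Qed.

Lemma wactZ w c v : wact w (c *: v) = c *: wact w v.
Proof. by elim: w => //= j w ->; rewrite reflZ. Qed.

Lemma wactN w v : wact w (- v) = - wact w v.
Proof. by rewrite -scaleN1r wactZ scaleN1r. Qed.

Lemma wact_sum w (I : finType) (F : I -> V) : wact w (\sum_i F i) = \sum_i wact w (F i).
Proof.
elim/big_rec2: _ => [|i u v _ <-]; rewrite ?wactD //.
by rewrite -[0 : V](scale0r 0) wactZ !scale0r.
Qed.

Lemma wact_root w v : v \in Phi -> wact w v \in Phi.
Proof. by elim: w => //= j w IH /IH; apply: refl_root (alpha_root j). Qed.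

Lemma dot_wact w u v : dot (wact w u) (wact w v) = dot u v.
Proof. by elim: w => //= j w <-; rewrite dot_refl ?alpha_neq0. Qed.

Lemma wact_refl w a v : wact w (refl a v) = refl (wact w a) (wact w v).
Proof. by rewrite /refl wactD wactN wactZ !dot_wact. Qed.

Lemma wactK w : cancel (wact w) (wact (rev w)).
Proof.
elim: w => //= j w IH v; rewrite rev_cons wact_rcons (reflK (alpha_neq0 j)).
exact: IH.
Qed.

Lemma wact_revK w : cancel (wact (rev w)) (wact w).
Proof. by move=> v; have := wactK (rev w) v; rewrite revK. Qed.

Lemma wact_inj w : injective (wact w).
Proof. exact: can_inj (wactK w). Qed.

Lemma posrootP b : posroot Phi alpha b <-> b \in Phi /\ natcoords b.
Proof. by split=> -[bP /(nncombP alpha_free) b_nat]; split=> //; apply/(nncombP alpha_free). Qed.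

Lemma rleP b g : rle alpha b g <-> natcoords (g - b).
Proof. exact: nncombP. Qed.

Lemma NbarP w b :
  Nbar Phi alpha w b <-> [/\ b \in Phi, natcoords b & natcoords (- wact w b)].
Proof.
have natP := nncombP alpha_free.
split=> [[[bP /natP b_nat] [g [[_ /natP g_nat] ->]]]|[bP b_nat wb_neg]].
  by rewrite opprK.
split; first by split=> //; apply/natP.
exists (- wact w b); rewrite opprK; split=> //.
by split; [rewrite oppr_root ?wact_root | apply/natP].
Qed.

Lemma Nbar_nil b : ~ Nbar Phi alpha [::] b.
Proof. by case/NbarP => /root_not_both_signs. Qed.

Lemma Nbar_cons_simple w j beta : beta \in Phi -> natcoords beta ->
  wact w beta = alpha j ->
  forall b, Nbar Phi alpha (j :: w) b <-> Nbar Phi alpha w b \/ b = beta.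
Proof.
move=> betaP beta_nat wbeta b.
split=> [/NbarP [bP b_nat /= swb_neg]|[/NbarP [bP b_nat wb_neg]|->]].
- have [->|bbeta] := eqVneq b beta; [by right|left].
  apply/NbarP; split=> //; case: (root_signs (wact_root w bP)) => // wb_pos.
  have wbj : wact w b != alpha j by apply: contraNneq bbeta; rewrite -wbeta => /wact_inj ->.
  have [swb_pos _] := refl_simple_pos (wact_root w bP) wb_pos wbj.
  by have [] := root_not_both_signs (refl_root (alpha_root j) (wact_root w bP)) swb_pos swb_neg.
- apply/NbarP; split=> //=; rewrite -reflN.
  have wbj : - wact w b != alpha j.
    apply/eqP => wbE; apply: (root_not_both_signs betaP beta_nat).
    have -> : - beta = b by apply: (@wact_inj w); rewrite wactN wbeta -wbE opprK.
    exact: b_nat.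
  by case: (refl_simple_pos (oppr_root (wact_root w bP)) wb_neg wbj).
- apply/NbarP; split=> //=; rewrite wbeta refl_self ?alpha_neq0 // opprK.
  exact: natcoords_alpha.
Qed.

Definition ninv w := count (fun b => `[< Nbar Phi alpha w b >]) (undup Phi).

Lemma ninv_nil : ninv [::] = 0%N.
Proof.
by rewrite /ninv (eq_count (a2 := pred0)) ?count_pred0 // => b; apply/asboolP/Nbar_nil.
Qed.

Lemma ninv_equiv w w' : wequiv alpha w w' -> ninv w = ninv w'.
Proof. by move=> ww'; apply: eq_count => b; rewrite /Nbar ww'. Qed.

Lemma perm_refl_roots j : perm_eq (map (refl (alpha j)) (undup Phi)) (undup Phi).
Proof.
have sK := reflK (alpha_neq0 j).
apply: uniq_perm => [||x]; rewrite ?(map_inj_uniq (inv_inj sK)) ?undup_uniq //.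
rewrite mem_undup; apply/mapP/idP => [[y]|xP].
  by rewrite mem_undup => yP ->; rewrite refl_root ?alpha_root.
by exists (refl (alpha j) x); rewrite ?sK // mem_undup refl_root ?alpha_root.
Qed.

Lemma ninv_rcons w j : natcoords (wact w (alpha j)) -> ninv (rcons w j) = (ninv w).+1.
Proof.
move=> wj_pos; have sK := reflK (alpha_neq0 j).
have aP : alpha j \in undup Phi by rewrite mem_undup alpha_root.
rewrite /ninv [LHS](count_uniq_rem _ (undup_uniq Phi) aP).
rewrite [in RHS](count_uniq_rem _ (undup_uniq Phi) aP).
have -> : `[< Nbar Phi alpha (rcons w j) (alpha j) >] = true.
  apply/asboolP/NbarP; split; [exact: alpha_root|exact: natcoords_alpha|].
  by rewrite wact_rcons refl_self ?alpha_neq0 // wactN opprK.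
have -> : `[< Nbar Phi alpha w (alpha j) >] = false.
  apply/asboolP => /NbarP [_ _].
  exact: root_not_both_signs (wact_root w (alpha_root j)) wj_pos.
congr (_ + _)%N; rewrite -(permP (perm_refl_roots j)) count_map.
apply: eq_in_count => x; rewrite mem_undup /= => xP.
apply/andP/andP => -[/asboolP/NbarP [_ y_nat wy_neg] yj].
  have := refl_simple_pos (refl_root (alpha_root j) xP) y_nat yj; rewrite sK => -[x_nat xj].
  by split=> //; apply/asboolP/NbarP; split=> //; rewrite -[x]sK -wact_rcons.
have [sx_nat sxj] := refl_simple_pos xP y_nat yj.
by split=> //; apply/asboolP/NbarP; split; rewrite ?refl_root ?alpha_root // wact_rcons sK.
Qed.

Lemma ninv_rcons_desc w j :
  natcoords (- wact w (alpha j)) -> ninv w = (ninv (rcons w j)).+1.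
Proof.
move=> wj_neg; rewrite -(ninv_rcons (w := rcons w j) (j := j)); last by rewrite wact_rcons refl_self ?alpha_neq0 // wactN.
by apply: ninv_equiv => v; rewrite !wact_rcons (reflK (alpha_neq0 j)).
Qed.

Lemma ninv_le_size w : (ninv w <= size w)%N.
Proof.
elim/last_ind: w => [|w j IH]; first by rewrite ninv_nil.
rewrite size_rcons; case: (root_signs (wact_root w (alpha_root j))).
  by move/ninv_rcons ->.
by move/ninv_rcons_desc; lia.
Qed.

Lemma descent_deletion w j : natcoords (- wact w (alpha j)) ->
  exists2 w', (size w').+1 = size w & wequiv alpha (rcons w j) w'.
Proof.
elim: w => [|k w IH] /= wj_neg.
  by have [] := root_not_both_signs (alpha_root j) (natcoords_alpha alpha_free j) wj_neg.
case: (root_signs (wact_root w (alpha_root j))) => [wj_pos|/IH [w' <- ww']]; last first.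
  by exists (k :: w') => // v /=; rewrite -ww'.
have [wjk|wjk] := eqVneq (wact w (alpha j)) (alpha k).
  exists w => // v /=; rewrite wact_rcons wact_refl wjk.
  exact: (reflK (alpha_neq0 k)).
have [swj_pos _] := refl_simple_pos (wact_root w (alpha_root j)) wj_pos wjk.
by have [] := root_not_both_signs (refl_root (alpha_root k) (wact_root w (alpha_root j))) swj_pos wj_neg.
Qed.

Lemma reduced_word w : exists2 w', size w' = ninv w & wequiv alpha w w'.
Proof.
elim/last_ind: w => [|w j [w' w'_size ww']]; first by exists [::]; rewrite ?ninv_nil.
case: (root_signs (wact_root w (alpha_root j))) => [wj_pos|wj_neg].
  exists (rcons w' j); first by rewrite size_rcons w'_size ninv_rcons.
  by move=> v; rewrite !wact_rcons ww'.
have [|w'' w''_size w'w''] := descent_deletion (w := w') (j := j); first by rewrite -ww'.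
exists w''; last by move=> v; rewrite -w'w'' !wact_rcons ww'.
by apply/succn_inj; rewrite w''_size w'_size; apply: ninv_rcons_desc.
Qed.

Lemma is_length_ninv w : is_length alpha w (ninv w).
Proof.
split; first by have [w' ? ?] := reduced_word w; exists w'.
by move=> w' /ninv_equiv ->; apply: ninv_le_size.
Qed.

Lemma is_length_eq w k : is_length alpha w k -> k = ninv w.
Proof.
case=> -[w' [<- ww']] w_min; apply/eqP; rewrite eqn_leq.
have [w'' w''_size /w_min] := reduced_word w; rewrite w''_size => -> /=.
by rewrite (ninv_equiv ww') ninv_le_size.
Qed.

Lemma right_descentP w j : right_descent alpha w j <-> natcoords (- wact w (alpha j)).
Proof.
split=> [[k1 [k2 [/is_length_eq -> /is_length_eq -> lt_k]]]|/ninv_rcons_desc ninvE].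
  case: (root_signs (wact_root w (alpha_root j))) => // /ninv_rcons wj_pos.
  by move: lt_k; rewrite wj_pos ltnNge leqnSn.
exists (ninv (rcons w j)), (ninv w).
by split; [exact: is_length_ninv|exact: is_length_ninv|rewrite ninvE].
Qed.

Lemma in_Wi_natcoords i w v : in_Wi alpha i w -> natcoords v -> bcoord v i = 0 ->
  natcoords (wact w v).
Proof.
move=> w_Wi v_nat vi0 k; rewrite -[v](bcoordK alpha_free) wact_sum bcoord_sum.
apply: is_nat_sum => j; rewrite wactZ bcoordZ.
have [->|ji] := eqVneq j i; first by rewrite vi0 mul0r; exact: is_nat0.
apply: is_natM => //; case: (root_signs (wact_root w (alpha_root j))) => [wj_nat|].
  exact: wj_nat.
by move/right_descentP/w_Wi => ij; rewrite ij eqxx in ji.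
Qed.


Section Minuscule.
Variables (theta : V) (m : 'I_n -> nat) (i : 'I_n).
Hypotheses (thetaE : theta = \sum_(j < n) (m j)%:R *: alpha j)
  (theta_max : forall b, posroot Phi alpha b -> rle alpha b theta) (mi1 : m i = 1%N).
Local Notation M := (Mset Phi alpha i).

Lemma bcoord_le1 b : b \in Phi -> natcoords b -> bcoord b i <= 1.
Proof.
move=> bP b_nat; have /rleP /(_ i) /is_nat_ge0 := theta_max (proj2 (posrootP b) (conj bP b_nat)).
by rewrite bcoordB thetaE bcoord_comb // mi1 subr_ge0.
Qed.

Lemma MsetP b : M b <-> [/\ b \in Phi, natcoords b & bcoord b i = 1].
Proof.
split=> [[/posrootP [bP b_nat] /rleP /(_ i) /is_nat_ge0]|[bP b_nat bi1]].
  rewrite bcoordB (bcoord_alpha alpha_free) eqxx subr_ge0 => bi_ge1.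
  by split=> //; apply/le_anti; rewrite bi_ge1 bcoord_le1.
split; first exact/posrootP.
apply/rleP => k; rewrite bcoordB (bcoord_alpha alpha_free).
have [<-|ik] := eqVneq i k; last by rewrite subr0.
by rewrite bi1 subrr; exact: is_nat0.
Qed.

Lemma Mset_upclosed b g : M b -> g \in Phi -> natcoords g -> natcoords (g - b) -> M g.
Proof.
case/MsetP=> _ _ bi1 gP g_nat /(_ i) /is_nat_ge0; rewrite bcoordB bi1 subr_ge0 => gi_ge1.
by apply/MsetP; split=> //; apply/le_anti; rewrite gi_ge1 bcoord_le1.
Qed.

Lemma Mset_addr_notin b g : M b -> M g -> b + g \notin Phi.
Proof.
case/MsetP=> _ b_nat bi1 /MsetP [_ g_nat gi1]; apply/negP => bgP.
by have := bcoord_le1 bgP (natcoordsD b_nat g_nat); rewrite bcoordD bi1 gi1; lra.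
Qed.

Lemma abelian_ideal_Nbar w : in_Wi alpha i w ->
  abelian_ideal Phi alpha (fun b => M b /\ ~ Nbar Phi alpha w b).
Proof.
move=> w_Wi; split=> [b [[]] //|b g [bM bw] /posrootP [gP g_nat] /rleP gb_nat|b g [bM _] [gM _]].
  have gM := Mset_upclosed bM gP g_nat gb_nat; split=> // /NbarP [_ _ wg_neg].
  have [/MsetP [bP b_nat bi1] /MsetP [_ _ gi1]] := (bM, gM).
  have wb_pos : natcoords (wact w b).
    by case: (root_signs (wact_root w bP)) => // wb_neg; case: bw; apply/NbarP.
  have wgb_pos : natcoords (wact w (g - b)).
    by apply: in_Wi_natcoords w_Wi gb_nat _; rewrite bcoordB bi1 gi1 subrr.
  apply: root_not_both_signs (wact_root w gP) _ wg_neg.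
  by rewrite -(subrK b g) wactD; apply: natcoordsD.
exact: Mset_addr_notin.
Qed.

Lemma in_Wi_Nbar w : (forall b, Nbar Phi alpha w b -> M b) -> in_Wi alpha i w.
Proof.
move=> Nbar_M j /right_descentP wj_neg.
have /Nbar_M /MsetP [_ _] : Nbar Phi alpha w (alpha j).
  by apply/NbarP; split; [exact: alpha_root|exact: natcoords_alpha|].
rewrite (bcoord_alpha alpha_free); have [//|_] := eqVneq j i.
by move/eqP; rewrite eq_sym oner_eq0.
Qed.

Section MinimalRoot.
Variables (w : seq 'I_n) (beta : V).
Hypotheses (Nbar_M : forall b, Nbar Phi alpha w b -> M b)
  (beta_M : M beta) (beta_notin : ~ Nbar Phi alpha w beta)
  (beta_min : forall x, M x -> rle alpha x beta -> ~ Nbar Phi alpha w x -> x = beta).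

Lemma wact_pos_bcoord x : x \in Phi -> natcoords (wact w x) ->
  natcoords x /\ (bcoord x i = 0 \/ bcoord x i = 1) \/ bcoord x i = -1.
Proof.
move=> xP wx_pos; case: (root_signs xP) => [x_nat|xN_nat].
  by left; split=> //; apply: is_nat_le1 (x_nat i) (bcoord_le1 xP x_nat).
right; have /Nbar_M /MsetP [_ _] : Nbar Phi alpha w (- x).
  by apply/NbarP; split; rewrite ?oppr_root ?wactN ?opprK.
by rewrite bcoordN => /eqP; rewrite eqr_oppLR => /eqP.
Qed.

Lemma beta_not_wact_pos_sum x y : x \in Phi -> y \in Phi -> beta = x + y ->
  natcoords (wact w x) -> natcoords (wact w y) -> False.
Proof.
have /MsetP [_ _ beta1] := beta_M.
move=> xP yP betaE wx_pos wy_pos.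
have xy1 : bcoord x i + bcoord y i = 1 by rewrite -bcoordD -betaE.
wlog x1 : x y xP yP betaE wx_pos wy_pos xy1 / bcoord x i = 1.
  move=> base; have [x1|y1] : bcoord x i = 1 \/ bcoord y i = 1.
    case: (wact_pos_bcoord xP wx_pos) (wact_pos_bcoord yP wy_pos) => [[_ [xi|xi]]|xi] [[_ [yi|yi]]|yi];
      by [right|left|exfalso; lra].
    exact: (base x y).
  by apply: (base y x); rewrite // addrC.
have x_nat : natcoords x by case: (wact_pos_bcoord xP wx_pos) => [[x_nat _]|xN1] //; exfalso; lra.
have y_nat : natcoords y by case: (wact_pos_bcoord yP wy_pos) => [[y_nat _]|yN1] //; exfalso; lra.
have xM : M x by apply/MsetP.
have xbeta : rle alpha x beta by apply/rleP; rewrite betaE (addrC x) addrK.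
have /(beta_min xM xbeta) xE : ~ Nbar Phi alpha w x.
  by case/NbarP => _ _; apply: root_not_both_signs (wact_root w xP) wx_pos.
move: (root_neq0 yP); rewrite (_ : y = 0) ?eqxx //.
by apply: (@addrI _ x); rewrite -betaE xE addr0.
Qed.

Lemma wact_minimal_simple : exists j, wact w beta = alpha j.
Proof.
have /MsetP [betaP beta_nat _] := beta_M.
have wbetaP := wact_root w betaP.
have wbeta_nat : natcoords (wact w beta).
  by case: (root_signs wbetaP) => // wbeta_neg; case: beta_notin; apply/NbarP.
apply: contrapT => /forallNP not_simple.
have [|j [gP g_nat]] := exists_simple_subr wbetaP wbeta_nat.
  by move=> j; apply/eqP/not_simple.
apply: (@beta_not_wact_pos_sum (wact (rev w) (alpha j)) (wact (rev w) (wact w beta - alpha j))).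
- exact/wact_root/alpha_root.
- exact: wact_root.
- by apply: (@wact_inj w); rewrite wactD !wact_revK addrC subrK.
- by rewrite wact_revK; apply: natcoords_alpha.
- by rewrite wact_revK.
Qed.

End MinimalRoot.

(* Induction on [#|N|]: removing from [N] an element maximal in the root poset keeps
   [M_i \ N] upward closed. *)
Lemma exists_Nbar_eq k (N : V -> Prop) :
  (forall b, N b -> M b) ->
  (forall b g, M b -> ~ N b -> posroot Phi alpha g -> rle alpha b g -> ~ N g) ->
  count (fun b => `[< N b >]) (undup Phi) = k ->
  exists w, forall b, N b <-> Nbar Phi alpha w b.
Proof.
elim: k N => [|k IH] N N_M N_up N_card.
  exists [::] => b; split=> [Nb|/Nbar_nil //]; exfalso.
  have /MsetP [bP _ _] := N_M b Nb.
  suff : has (fun b => `[< N b >]) (undup Phi) by rewrite has_count N_card.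
  by apply/hasP; exists b; rewrite ?mem_undup //; apply/asboolP.
have [|beta [betaP N_beta beta_top]] := exists_maximal alpha_free (P := N) (s := Phi).
  have /hasP [x] : has (fun b => `[< N b >]) (undup Phi) by rewrite has_count N_card.
  by rewrite mem_undup => xP /asboolP; exists x.
have beta_pos : posroot Phi alpha beta by case: (N_M _ N_beta).
pose N' b := N b /\ b != beta.
have [|||w Nw] := IH N'.
- by move=> b [/N_M].
- move=> b g bM N'b gpos bg [Ng gbeta]; have [bbeta|bbeta] := eqVneq b beta.
    case/posrootP: gpos => gP _; move/rleP: bg; rewrite bbeta => /(beta_top g gP Ng) gE.
    by rewrite gE eqxx in gbeta.
  by apply: N_up bM _ gpos bg Ng => Nb; apply: N'b.
- apply: succn_inj; rewrite -N_card [RHS](count_uniq_rem _ (undup_uniq Phi) (_ : beta \in undup Phi)).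
    by rewrite /= (asboolT N_beta); congr (_.+1); apply: eq_count => b; rewrite /N' asbool_and asboolb.
  by rewrite mem_undup.
have [j wbeta] : exists j, wact w beta = alpha j.
  apply: (wact_minimal_simple (w := w) (beta := beta)).
  - by move=> b /Nw [/N_M].
  - exact: N_M.
  - by case/Nw => _; rewrite eqxx.
  - move=> x xM xbeta /Nw N'x; have [//|xnbeta] := eqVneq x beta; exfalso.
    by apply: N_up xM _ beta_pos xbeta N_beta => Nx; apply: N'x.
have /MsetP [_ beta_nat _] := N_M _ N_beta.
exists (j :: w) => b; split=> [Nb|/(Nbar_cons_simple betaP beta_nat wbeta) [/Nw []//|->//]].
apply/(Nbar_cons_simple betaP beta_nat wbeta).
by have [->|bbeta] := eqVneq b beta; [right|left; apply/Nw].
Qed.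

End Minuscule.

End RootSystem.

Theorem proposition5p4 (R : realFieldType) (n : nat)
    (Phi : seq 'rV[R]_n) (alpha : 'I_n -> 'rV[R]_n)
    (theta : 'rV[R]_n) (m : 'I_n -> nat) (i : 'I_n) (N : 'rV[R]_n -> Prop) :
  root_system Phi -> irreducible_rs Phi -> is_base Phi alpha ->
  theta \in Phi -> theta = \sum_(j < n) (m j)%:R *: alpha j ->
  (forall b, posroot Phi alpha b -> rle alpha b theta) ->
  m i = 1%N ->
  (forall b, N b -> Mset Phi alpha i b) ->
  (abelian_ideal Phi alpha (fun b => Mset Phi alpha i b /\ ~ N b) <->
   exists w : seq 'I_n, in_Wi alpha i w /\ (forall b, N b <-> Nbar Phi alpha w b)).
Proof.
move=> Phi_rs _ alpha_base _ thetaE theta_max mi1 N_M.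
split=> [[_ N_up _]|[w [w_Wi Nw]]].
  have [|w Nw] := exists_Nbar_eq Phi_rs alpha_base thetaE theta_max mi1 (N := N) N_M _ (erefl _).
    by move=> b g bM Nb gpos bg Ng; have [] := N_up b g (conj bM Nb) gpos bg.
  exists w; split=> //; apply: (in_Wi_Nbar Phi_rs alpha_base thetaE theta_max mi1).
  by move=> b /Nw /N_M.
have -> : N = Nbar Phi alpha w by apply/funext => b; apply/propext.
exact: (abelian_ideal_Nbar Phi_rs alpha_base thetaE theta_max mi1).
Qed.
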